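(* Let $\alpha,\beta,\gamma\in\mathbb{Z}_2^n$. Then (1) $\mathrm{cadp}_0(\alpha,\beta,\gamma)\ne0$ if and only if $\mathrm{adp}^{\oplus}(\alpha,\beta\to\gamma)\ne0$; (2) $\mathrm{cadp}_1(\alpha,\beta,\gamma)\ne0$ if and only if $\mathrm{adp}^{\oplus}(\alpha,\beta\to\gamma)\ne0$ and $\gamma\ne0$.
   Context: For $x\in\mathbb{Z}_2^n$, $x=(x_0,\dots,x_{n-1})$ is identified with the integer $\sum_i x_i2^{n-1-i}$; $+$ is addition modulo $2^n$, $\oplus$ is bitwise XOR. $\mathrm{adp}^{\oplus}(\alpha,\beta\to\gamma)=4^{-n}\#\{(x,y): (x+\alpha)\oplus(y+\beta)=(x\oplus y)+\gamma\}$. Indices $0,\dots,7$ are identified with $\mathbb{Z}_2^3$ via $(p_0,p_1,p_2)\leftrightarrow4p_0+2p_1+p_2$; $e_0,\dots,e_7$ are the standard basis row vectors of $\mathbb{Q}^8$. $A_0$ is $\frac14$ times the $8\times8$ matrix with rows $(4,0,0,1,0,1,1,0)$, $(0,0,0,1,0,1,0,0)$, $(0,0,0,1,0,0,1,0)$, $(0,0,0,1,0,0,0,0)$, $(0,0,0,0,0,1,1,0)$, $(0,0,0,0,0,1,0,0)$, $(0,0,0,0,0,0,1,0)$, $(0,\dots,0)$, and $(A_k)_{i,j}=(A_0)_{i\oplus k,j\oplus k}$. For $\alpha,\beta,\gamma$ let $\omega_i=4\alpha_i+2\beta_i+\gamma_i$. With $L_0=(1,0,1,0,1,0,1,0)$,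 $L_1=(0,1,0,1,0,1,0,1)$, $\mathrm{cadp}_c(\alpha,\beta,\gamma)=L_cA_{\omega_0}\cdots A_{\omega_{n-1}}e_0^T$. (It is known that $\mathrm{adp}^{\oplus}(\alpha,\beta\to\gamma)=(1,\dots,1)A_{\omega_0}\cdots A_{\omega_{n-1}}e_0^T=\mathrm{cadp}_0+\mathrm{cadp}_1$.) *)

From HB Require Import structures.
From mathcomp Require Import all_boot all_order all_algebra.
Set Implicit Arguments. Unset Strict Implicit. Unset Printing Implicit Defensive.
Import Order.TTheory GRing.Theory Num.Theory.
Local Open Scope ring_scope.

Definition bv (n : nat) := {ffun 'I_n -> bool}.

(* x <-> sum_i x_i 2^(n-1-i)  (x_0 is the most significant bit) *)
Definition bv_to_nat n (x : bv n) : nat :=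
  (\sum_(i < n) (x i : nat) * 2 ^ (n.-1 - i))%N.

Definition bv_of_nat n (m : nat) : bv n :=
  [ffun i : 'I_n => odd (m %/ 2 ^ (n.-1 - i))].

Definition bv_add n (x y : bv n) : bv n :=
  bv_of_nat n ((bv_to_nat x + bv_to_nat y) %% 2 ^ n).

Definition bv_xor n (x y : bv n) : bv n := [ffun i => x i (+) y i].

Definition adp n (a b g : bv n) : rat :=
  (#|[set p : bv n * bv n |
       bv_xor (bv_add p.1 a) (bv_add p.2 b) == bv_add (bv_xor p.1 p.2) g]|)%:R
  / (4 ^ n)%:R.

(* indices 0..7 <-> Z_2^3 via (p0,p1,p2) <-> 4p0+2p1+p2; XOR of indices *)
Definition xor8 (i k : 'I_8) : 'I_8 :=
  inord (4 * (odd (i %/ 4) (+) odd (k %/ 4))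
         + 2 * (odd (i %/ 2) (+) odd (k %/ 2))
         + (odd i (+) odd k))%N.

Definition A0_rows : seq (seq nat) :=
  [:: [:: 4; 0; 0; 1; 0; 1; 1; 0]%N;
      [:: 0; 0; 0; 1; 0; 1; 0; 0]%N;
      [:: 0; 0; 0; 1; 0; 0; 1; 0]%N;
      [:: 0; 0; 0; 1; 0; 0; 0; 0]%N;
      [:: 0; 0; 0; 0; 0; 1; 1; 0]%N;
      [:: 0; 0; 0; 0; 0; 1; 0; 0]%N;
      [:: 0; 0; 0; 0; 0; 0; 1; 0]%N;
      [:: 0; 0; 0; 0; 0; 0; 0; 0]%N].

Definition A0 : 'M[rat]_8 :=
  \matrix_(i < 8, j < 8) ((nth 0%N (nth [::] A0_rows i) j)%:R / 4).

Definition Amat (k : 'I_8) : 'M[rat]_8 :=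
  \matrix_(i < 8, j < 8) A0 (xor8 i k) (xor8 j k).

Definition omega n (a b g : bv n) (i : 'I_n) : 'I_8 :=
  inord (4 * a i + 2 * b i + g i)%N.

Definition Lvec (c : bool) : 'rV[rat]_8 := \row_(j < 8) (odd j == c)%:R.

Definition e0 : 'rV[rat]_8 := \row_(j < 8) (j == 0%N :> nat)%:R.

Definition Aprod n (a b g : bv n) : 'M[rat]_8 :=
  \prod_(i < n) Amat (omega a b g i).

Definition cadp (c : bool) n (a b g : bv n) : rat :=
  (Lvec c *m Aprod a b g *m (e0^T)) 0 0.

(* Read x and y from the least significant bit upwards.  Bit k of
   (x + α) ⊕ (y + β) equals bit k of (x ⊕ y) + γ iff α_k ⊕ β_k ⊕ γ_k is the
   parity of the three carries into bit k of x + α, y + β and (x ⊕ y) + γ, so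
   the solutions (x, y) are the runs of an automaton whose 8 states are these
   carry triples and which reads the letters ω_{n-1}, ..., ω_0.  The nonzero
   pattern of A_ω is its transition relation on the letter ω and all entries are
   nonnegative, so the support of A_{ω_0} ⋯ A_{ω_{n-1}} e_0^T is the set of
   states reachable from the zero state: adp ≠ 0 iff that set is nonempty, and
   cadp_c ≠ 0 iff it contains a state whose third carry is c.  Finally, the pairs
   (reachable set, whether some γ_k = 1 was read) form a closed family of 26
   elements, on each of which both equivalences are checked by computation. *)

From HB Require Import structures.
From mathcomp Require Import all_boot all_order all_algebra zify.
Set Implicit Arguments. Unset Strict Implicit. Unset Printing Implicit Defensive.
Import Order.TTheory GRing.Theory Num.Theory.

Definition majority (x y z : bool) : bool := [|| x && y, x && z | y && z].

Definition bits_val (m : nat) (f : nat -> bool) : nat := \sum_(k < m) f k * 2 ^ k.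

Definition carry (m : nat) (f h : nat -> bool) : bool :=
  2 ^ m <= bits_val m f + bits_val m h.

Lemma bits_valS m f : bits_val m.+1 f = bits_val m f + f m * 2 ^ m.
Proof. by rewrite /bits_val big_ord_recr. Qed.

Lemma bits_val_lt m f : bits_val m f < 2 ^ m.
Proof.
elim: m => [|m IHm]; first by rewrite /bits_val big_ord0.
by rewrite bits_valS expnS; case: (f m) => /=; lia.
Qed.

Lemma eq_bits_val m f f' :
  (forall k, k < m -> f k = f' k) -> bits_val m f = bits_val m f'.
Proof. by move=> ff'; apply: eq_bigr => k _; rewrite ff'. Qed.

Lemma eq_carry m f f' h h' :
  (forall k, k < m -> f k = f' k) -> (forall k, k < m -> h k = h' k) ->
  carry m f h = carry m f' h'.
Proof. by move=> ff' hh'; rewrite /carry (eq_bits_val ff') (eq_bits_val hh'). Qed.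

Lemma carryS m f h : carry m.+1 f h = majority (f m) (h m) (carry m f h).
Proof.
rewrite /carry !bits_valS expnS.
have := bits_val_lt m f; have := bits_val_lt m h.
move: (bits_val m f) (bits_val m h) (2 ^ m) => u v p ltu ltv.
by case: (f m); case: (h m); rewrite /majority /= ?mul1n ?mul0n ?addn0; apply/idP/idP; lia.
Qed.

Lemma divn_lt_double s p : 0 < p -> s < p.*2 -> s %/ p = (p <= s).
Proof.
move=> p_gt0 lts; case: leqP => [les | /divn_small //].
by apply/eqP; rewrite eqn_leq -ltnS ltn_divLR // leq_divRL // mul1n les andbT; lia.
Qed.

Lemma odd_bits_val_addn k m f h : k < m ->
  odd ((bits_val m f + bits_val m h) %/ 2 ^ k) = f k (+) h k (+) carry k f h.
Proof.
elim: m => [|m IHm] //; rewrite ltnS leq_eqVlt => /orP [/eqP -> | ltkm].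
  rewrite !bits_valS addnACA -mulnDl addnC divnMDl ?expn_gt0 //.
  rewrite divn_lt_double ?expn_gt0 //; last first.
    by have := bits_val_lt m f; have := bits_val_lt m h; rewrite -addnn; lia.
  by rewrite !oddD !oddb.
rewrite !bits_valS addnACA -mulnDl addnC.
have -> : 2 ^ m = 2 ^ (m - k) * 2 ^ k by rewrite -expnD subnK // ltnW.
by rewrite mulnA divnMDl ?expn_gt0 // oddD IHm // oddM oddX subn_eq0 leqNgt ltkm andbF.
Qed.

Lemma odd_modn_exp2 k n M : k < n -> odd (M %% 2 ^ n %/ 2 ^ k) = odd (M %/ 2 ^ k).
Proof.
move=> ltkn; rewrite -(subnK (ltnW ltkn)) expnD -modn_divl odd_mod //.
by rewrite oddX subn_eq0 leqNgt ltkn.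
Qed.

Lemma existsb_ord_iota m (P : pred nat) : [exists i : 'I_m, P i] = has P (iota 0 m).
Proof.
apply/existsP/hasP => [[i Pi] | [i]]; first by exists (nat_of_ord i); rewrite ?mem_iota /=.
by rewrite mem_iota => /= lt_im Pi; exists (Ordinal lt_im).
Qed.

Section BitVectors.
Variable n : nat.

(* The bit of weight [2 ^ k]; it is [false] for [k >= n]. *)
Definition wbit (x : bv n) (k : nat) : bool := [exists i : 'I_n, (n.-1 - i == k) && x i].

Definition bv_of_bits (f : nat -> bool) : bv n := [ffun i : 'I_n => f (n.-1 - i)].

Lemma wbit_ord (x : bv n) (i : 'I_n) : wbit x (n.-1 - i) = x i.
Proof.
apply/existsP/idP => [[j /andP [/eqP eq_ji xj]] | xi]; last by exists i; rewrite eqxx.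
suff -> : i = j by [].
by apply: val_inj; move: eq_ji (ltn_ord i) (ltn_ord j) => /=; lia.
Qed.

Lemma wbit_of_bits f k : k < n -> wbit (bv_of_bits f) k = f k.
Proof.
move=> ltkn; have ltk'n : n.-1 - k < n by lia.
have -> : k = n.-1 - Ordinal ltk'n by rewrite /=; lia.
by rewrite wbit_ord ffunE.
Qed.

Lemma bv_wbitP (x y : bv n) : reflect (forall k, k < n -> wbit x k = wbit y k) (x == y).
Proof.
apply: (iffP eqP) => [-> // | eq_xy]; apply/ffunP => i.
by rewrite -!wbit_ord eq_xy //; have := ltn_ord i; lia.
Qed.

Lemma bv_to_natE (x : bv n) : bv_to_nat x = bits_val n (wbit x).
Proof.
rewrite /bv_to_nat /bits_val (reindex_inj rev_ord_inj) /=; apply: eq_bigr => i _.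
have -> : n.-1 - (n - i.+1) = i by have := ltn_ord i; lia.
by rewrite -[X in wbit x X](_ : n.-1 - rev_ord i = i) ?wbit_ord //=; have := ltn_ord i; lia.
Qed.

Lemma wbit_xor (x y : bv n) k : k < n -> wbit (bv_xor x y) k = wbit x k (+) wbit y k.
Proof.
move=> ltkn; rewrite -(wbit_of_bits (fun k => wbit x k (+) wbit y k) ltkn).
by congr wbit; apply/ffunP => i; rewrite !ffunE !wbit_ord.
Qed.

Lemma wbit_of_nat m k : k < n -> wbit (bv_of_nat n m) k = odd (m %/ 2 ^ k).
Proof. exact: (wbit_of_bits (fun k => odd (m %/ 2 ^ k))). Qed.

Lemma wbit_add (x y : bv n) k : k < n ->
  wbit (bv_add x y) k = wbit x k (+) wbit y k (+) carry k (wbit x) (wbit y).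
Proof.
by move=> ltkn; rewrite wbit_of_nat // odd_modn_exp2 // !bv_to_natE odd_bits_val_addn.
Qed.
End BitVectors.

Definition enc3 (p q r : bool) : nat := 4 * p + 2 * q + r.
Definition b2 (i : nat) : bool := odd (i %/ 4).
Definition b1 (i : nat) : bool := odd (i %/ 2).
Definition b0 (i : nat) : bool := odd i.
Definition parity3 (i : nat) : bool := b2 i (+) b1 i (+) b0 i.

Lemma enc3_lt8 p q r : enc3 p q r < 8. Proof. by case: p; case: q; case: r. Qed.
Lemma b2_enc3 p q r : b2 (enc3 p q r) = p. Proof. by case: p; case: q; case: r. Qed.
Lemma b1_enc3 p q r : b1 (enc3 p q r) = q. Proof. by case: p; case: q; case: r. Qed.
Lemma b0_enc3 p q r : b0 (enc3 p q r) = r. Proof. by case: p; case: q; case: r. Qed.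
Definition enc3E := (b2_enc3, b1_enc3, b0_enc3).

(* A state or a letter [enc3 p q r] stands for the triple (p, q, r): the
   carries into the current bit of x + α, y + β and (x ⊕ y) + γ, respectively
   the bits α_k, β_k, γ_k. *)
Definition next_state (l s : nat) (x y : bool) : nat :=
  enc3 (majority x (b2 l) (b2 s)) (majority y (b1 l) (b1 s))
       (majority (x (+) y) (b0 l) (b0 s)).

Definition step (l s t : nat) : bool :=
  (parity3 l == parity3 s) &&
  (t \in [seq next_state l s x y | x <- [:: false; true], y <- [:: false; true]]).

(* Sets of states are boolean lists of length 8, so that they can be compared
   by computation. *)
Definition set8 (P : pred nat) : seq bool := [seq P t | t <- iota 0 8].

Definition has_state (P : pred nat) (S : seq bool) : bool :=
  has (fun s => nth false S s && P s) (iota 0 8).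

Definition succ_set (l : nat) (S : seq bool) : seq bool :=
  set8 (fun t => has_state (fun s => step l s t) S).

Fixpoint reach (L : nat -> nat) (m : nat) : seq bool :=
  if m is m'.+1 then succ_set (L m') (reach L m') else set8 (eq_op 0).

Lemma stepP l s t :
  reflect (parity3 l = parity3 s /\ exists x y, t = next_state l s x y) (step l s t).
Proof.
apply: (iffP andP) => [[/eqP eq_par /allpairsP [[x y] [_ _ ->]]] | [-> [x [y ->]]]].
  by split=> //; exists x, y.
by split=> //; apply/allpairsP; exists (x, y); case: x; case: y.
Qed.

Lemma nth_set8 P t : nth false (set8 P) t = (t < 8) && P t.
Proof.
case: ltnP => [lt_t8 | ge_t8]; first by rewrite (nth_map 0) ?size_iota // nth_iota.
by rewrite nth_default // size_map size_iota.
Qed.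

Lemma nth_succ_set l S t : nth false (succ_set l S) t = (t < 8) &&
  [exists s : 'I_8, nth false S s && step l s t].
Proof. by rewrite nth_set8 /has_state -existsb_ord_iota. Qed.

(* Pairs (reachable set, some odd letter was read); three rounds of
   breadth-first search already saturate, as [reach_pairs_closed] certifies. *)
Definition reach_pairs : seq (seq bool * bool) :=
  iter 3 (fun Q => undup (Q ++ [seq (succ_set l p.1, p.2 || odd l) | p <- Q, l <- iota 0 8]))
    [:: (set8 (eq_op 0), false)].

Lemma reach_pairs_closed :
  all (fun p => all (fun l => (succ_set l p.1, p.2 || odd l) \in reach_pairs) (iota 0 8))
    reach_pairs.
Proof. by vm_compute. Qed.

Lemma reach_pairs_parity :
  all (fun p => all (fun c => has_state (fun s => odd s == c) p.1
                               == has_state predT p.1 && (c ==> p.2)) [:: false; true])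
    reach_pairs.
Proof. by vm_compute. Qed.

Lemma reach_in_reach_pairs (L : nat -> nat) m : (forall k, L k < 8) ->
  (reach L m, has (fun k => odd (L k)) (iota 0 m)) \in reach_pairs.
Proof.
move=> L_lt8; elim: m => [|m IHm]; first by vm_compute.
rewrite -addn1 iotaD has_cat /= orbF addn1.
have /allP /(_ _ IHm) /allP /(_ (L m)) := reach_pairs_closed.
by rewrite mem_iota L_lt8 => /(_ isT).
Qed.

Lemma reach_has_parity (L : nat -> nat) m c : (forall k, L k < 8) ->
  has_state (fun s => odd s == c) (reach L m) =
  has_state predT (reach L m) && (c ==> has (fun k => odd (L k)) (iota 0 m)).
Proof.
move=> L_lt8; have /allP /(_ _ (reach_in_reach_pairs m L_lt8)) := reach_pairs_parity.
move=> /allP /(_ c).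
by case: c => /(_ isT) /eqP.
Qed.

Section NonnegativeMatrices.
Local Open Scope ring_scope.
Variable R : numDomainType.

Lemma mulmx_nneg m p q (A : 'M[R]_(m, p)) (B : 'M[R]_(p, q)) i j :
  (forall k, 0 <= A i k) -> (forall k, 0 <= B k j) -> 0 <= (A *m B) i j.
Proof. by move=> A_ge0 B_ge0; rewrite mxE sumr_ge0 // => k _; rewrite mulr_ge0. Qed.

Lemma mulmx_nneg_neq0 m p q (A : 'M[R]_(m, p)) (B : 'M[R]_(p, q)) i j :
  (forall k, 0 <= A i k) -> (forall k, 0 <= B k j) ->
  ((A *m B) i j != 0) = [exists k, (A i k != 0) && (B k j != 0)].
Proof.
move=> A_ge0 B_ge0; rewrite mxE psumr_neq0 => [|k _]; last by rewrite mulr_ge0.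
apply/hasP/existsP => [[k _] | [k /andP [Ak Bk]]].
  by rewrite /= lt0r mulf_eq0 negb_or => /andP [/andP [Ak Bk] _]; exists k; rewrite Ak.
by exists k; rewrite ?mem_index_enum //= mulr_gt0 // lt0r ?Ak ?Bk /=.
Qed.
End NonnegativeMatrices.

Definition xor3 (i k : nat) : nat := enc3 (b2 i (+) b2 k) (b1 i (+) b1 k) (b0 i (+) b0 k).

Lemma xor8E (i k : 'I_8) : xor8 i k = xor3 i k :> nat.
Proof. by rewrite /xor8 inordK // enc3_lt8. Qed.

Lemma A0_support_table :
  all (fun l => all (fun t => all (fun s =>
    (nth 0 (nth [::] A0_rows (xor3 t l)) (xor3 s l) != 0) == step l s t)
  (iota 0 8)) (iota 0 8)) (iota 0 8).
Proof. by vm_compute. Qed.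

Section TransitionMatrices.
Local Open Scope ring_scope.

Lemma AmatE (l t s : 'I_8) :
  Amat l t s = (nth 0%N (nth [::] A0_rows (xor3 t l)) (xor3 s l))%:R / 4.
Proof. by rewrite !mxE !xor8E. Qed.

Lemma Amat_ge0 (l t s : 'I_8) : 0 <= Amat l t s.
Proof. by rewrite AmatE divr_ge0 ?ler0n. Qed.

Lemma Amat_neq0 (l t s : 'I_8) : (Amat l t s != 0) = step l s t.
Proof.
rewrite AmatE mulf_eq0 invr_eq0 negb_or pnatr_eq0 andbT.
have /allP /(_ l) := A0_support_table; rewrite mem_iota ltn_ord => /(_ isT).
move=> /allP /(_ t); rewrite mem_iota ltn_ord => /(_ isT).
by move=> /allP /(_ s); rewrite mem_iota ltn_ord => /(_ isT) /eqP.
Qed.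

Lemma prod_Amat_ge0 n (w : 'I_n -> 'I_8) (t s : 'I_8) : 0 <= (\prod_(i < n) Amat (w i)) t s.
Proof.
elim/big_ind: _ t s => [t s | M N M_ge0 N_ge0 t s | i _ t s]; last exact: Amat_ge0.
  by rewrite mxE ler0n.
by rewrite -mulmxE mulmx_nneg.
Qed.

Lemma prod_Amat_support n (w : 'I_n -> 'I_8) (L : nat -> nat) :
  (forall i : 'I_n, w i = L (n.-1 - i)%N :> nat) -> forall t : 'I_8,
  (((\prod_(i < n) Amat (w i)) *m e0^T) t 0 != 0) = nth false (reach L n) t.
Proof.
elim: n w => [|n IHn] w wE t.
  by rewrite big_ord0 mul1mx !mxE /= nth_set8 ltn_ord pnatr_eq0 eqb0 negbK eq_sym.
have e0_ge0 (s : 'I_8) : 0 <= e0^T s 0 by rewrite !mxE ler0n.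
rewrite big_ord_recl -mulmxE -mulmxA mulmx_nneg_neq0 => [|s|s]; last 2 first.
- exact: Amat_ge0.
- by apply: mulmx_nneg => // k; apply: prod_Amat_ge0.
rewrite /= nth_succ_set ltn_ord; apply: eq_existsb => s.
rewrite Amat_neq0 IHn => [|i]; last by rewrite wE /= /bump leq0n; congr L; lia.
by rewrite andbC wE subn0.
Qed.
End TransitionMatrices.

Section CarryAutomaton.
Variables (n : nat) (a b g : bv n).

Definition letter (k : nat) : nat := enc3 (wbit a k) (wbit b k) (wbit g k).

Definition carries (m : nat) (f h : nat -> bool) : nat :=
  enc3 (carry m f (wbit a)) (carry m h (wbit b)) (carry m (fun k => f k (+) h k) (wbit g)).

Definition bit_ok (k : nat) (f h : nat -> bool) : bool :=
  parity3 (letter k) == parity3 (carries k f h).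

Lemma omegaE (i : 'I_n) : omega a b g i = letter (n.-1 - i) :> nat.
Proof. by rewrite /letter !wbit_ord inordK ?enc3_lt8. Qed.

Lemma carries0 f h : carries 0 f h = 0.
Proof. by rewrite /carries /carry /bits_val !big_ord0. Qed.

Lemma carriesS m f h : carries m.+1 f h = next_state (letter m) (carries m f h) (f m) (h m).
Proof. by rewrite /carries /next_state /letter !enc3E !carryS. Qed.

Lemma eq_carries m f h f' h' :
  (forall k, k < m -> f k = f' k) -> (forall k, k < m -> h k = h' k) ->
  carries m f h = carries m f' h'.
Proof.
by move=> ff' hh'; congr enc3; apply: eq_carry => k ltkm //; rewrite ?ff' ?hh'.
Qed.

Lemma parity3_enc3 p q r : parity3 (enc3 p q r) = p (+) q (+) r.
Proof. by rewrite /parity3 !enc3E. Qed.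

Lemma addb_eq_parity x y p q r u v w :
  ((x (+) p (+) u) (+) (y (+) q (+) v) == x (+) y (+) r (+) w) =
  (p (+) q (+) r == u (+) v (+) w).
Proof. by case: x; case: y; case: p; case: q; case: r; case: u; case: v; case: w. Qed.

Lemma solutionP (x y : bv n) :
  reflect (forall k, k < n -> bit_ok k (wbit x) (wbit y))
          (bv_xor (bv_add x a) (bv_add y b) == bv_add (bv_xor x y) g).
Proof.
have bitE k : k < n -> (wbit (bv_xor (bv_add x a) (bv_add y b)) k
                        == wbit (bv_add (bv_xor x y) g) k) = bit_ok k (wbit x) (wbit y).
  move=> ltkn; have carry_xor : carry k (wbit (bv_xor x y)) (wbit g)
                              = carry k (fun j => wbit x j (+) wbit y j) (wbit g).
    by apply: eq_carry => // j ltjk; rewrite wbit_xor //; lia.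
  rewrite wbit_xor // !wbit_add // wbit_xor // carry_xor.
  by rewrite /bit_ok /carries !parity3_enc3 addb_eq_parity.
apply: (iffP (bv_wbitP _ _)) => H k ltkn; first by rewrite -bitE // H.
by move: (H k ltkn); rewrite -bitE // => /eqP.
Qed.

Lemma eq_bit_ok k f h f' h' :
  (forall j, j < k -> f j = f' j) -> (forall j, j < k -> h j = h' j) ->
  bit_ok k f h = bit_ok k f' h'.
Proof. by move=> ff' hh'; rewrite /bit_ok (eq_carries ff' hh'). Qed.

Lemma reachP m s :
  reflect (exists f h, (forall k, k < m -> bit_ok k f h) /\ carries m f h = s)
          (nth false (reach letter m) s).
Proof.
elim: m s => [|m IHm] s /=.
  rewrite nth_set8; apply: (iffP andP) => [[_ /eqP <-] | [f [h [_ <-]]]].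
    by exists xpred0, xpred0; rewrite carries0.
  by rewrite carries0.
rewrite nth_succ_set; apply: (iffP andP) => [[_ /existsP [s' /andP []]] | [f [h [ok_fh <-]]]].
  case/IHm=> [f [h [ok_fh <-]]] /stepP [par_ok [x [y ->]]].
  pose f' k := if k == m then x else f k; pose h' k := if k == m then y else h k.
  have [ff' hh'] : (forall k, k < m -> f k = f' k) /\ (forall k, k < m -> h k = h' k).
    by split=> k ltkm; rewrite /f' /h' ltn_eqF.
  exists f', h'; split; last by rewrite carriesS -(eq_carries ff' hh') /f' /h' eqxx.
  move=> k; rewrite ltnS leq_eqVlt => /orP [/eqP -> | ltkm].
    by rewrite -(eq_bit_ok ff' hh'); apply/eqP.
  by rewrite -(eq_bit_ok (fun j ltjk => ff' j (ltn_trans ltjk ltkm))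
                         (fun j ltjk => hh' j (ltn_trans ltjk ltkm))) ok_fh.
have lt8 : carries m f h < 8 by apply: enc3_lt8.
split; first exact: enc3_lt8.
apply/existsP; exists (Ordinal lt8); apply/andP; split.
  by apply/IHm; exists f, h; split=> // k ltkm; apply: ok_fh; apply: ltnW.
by apply/stepP; split; [apply/eqP/ok_fh | exists (f m), (h m); rewrite carriesS].
Qed.

Lemma adp_neq0 : (adp a b g != 0)%R = has_state predT (reach letter n).
Proof.
rewrite /adp mulf_eq0 invr_eq0 negb_or !pnatr_eq0 expn_eq0 /= andbT cards_eq0.
apply/set0Pn/hasP => [[[x y]] | [s _ /andP [/reachP [f [h [ok_fh _]]] _]]].
  rewrite inE => /solutionP ok_xy; exists (carries n (wbit x) (wbit y)).
    by rewrite mem_iota enc3_lt8.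
  by rewrite andbT; apply/reachP; exists (wbit x), (wbit y).
exists (bv_of_bits n f, bv_of_bits n h); rewrite inE; apply/solutionP => k ltkn.
by rewrite (eq_bit_ok (f' := f) (h' := h)) ?ok_fh // => j ltjk; rewrite wbit_of_bits //; lia.
Qed.

Lemma cadp_neq0 c :
  (cadp c a b g != 0)%R = has_state (fun s => odd s == c) (reach letter n).
Proof.
rewrite /cadp -mulmxA mulmx_nneg_neq0 => [|j|j]; last 2 first.
- by rewrite mxE ler0n.
- by apply: mulmx_nneg => k; [apply: prod_Amat_ge0 | rewrite !mxE ler0n].
rewrite /has_state -existsb_ord_iota; apply: eq_existsb => j.
by rewrite (prod_Amat_support omegaE) mxE pnatr_eq0 eqb0 negbK andbC.
Qed.

Lemma has_odd_letter : has (fun k => odd (letter k)) (iota 0 n) = (g != [ffun => false]).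
Proof.
have odd_letter k : odd (letter k) = wbit g k by rewrite -[odd _]/(b0 _) b0_enc3.
apply/hasP/negP => [[k _] | g_neq0].
  by rewrite odd_letter => /existsP [i /andP [_ gi]] /eqP g0; rewrite g0 ffunE in gi.
have [i gi] : exists i, g i.
  apply/existsP; apply: contra_notT g_neq0 => /existsPn g0.
  by apply/eqP/ffunP => i; rewrite ffunE (negbTE (g0 i)).
by exists (n.-1 - i); rewrite ?mem_iota /= ?odd_letter ?wbit_ord //; have := ltn_ord i; lia.
Qed.

End CarryAutomaton.

Local Open Scope ring_scope.

Theorem proposition3 (n : nat) (a b g : bv n) :
  (cadp false a b g != 0 <-> adp a b g != 0) /\
  (cadp true a b g != 0 <-> adp a b g != 0 /\ g != [ffun => false]).
Proof.
have letter_lt8 k : (letter a b g k < 8)%N by apply: enc3_lt8.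
rewrite !cadp_neq0 adp_neq0 !reach_has_parity // has_odd_letter andbT.
by split=> //; split=> [/andP [] | [-> ->]].
Qed.
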